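(* Let $K$ be a field of any characteristic and let $I_A\subset K[x_1,\ldots,x_n]$ be a toric ideal of height $r\ge 2$. If $I_A$ is a set-theoretic complete intersection on binomials, then $I_A$ is radical splittable.
   Context: $A=\{{\bf a}_1,\ldots,{\bf a}_n\}\subset\mathbb{Z}^m$ is a vector configuration with $\ker_{\mathbb{Z}}(A)\cap\mathbb{N}^n=\{{\bf 0}\}$, where $\ker_{\mathbb{Z}}(A)=\{{\bf u}\in\mathbb{Z}^n\mid\sum u_i{\bf a}_i={\bf 0}\}$; $I_A$ is the kernel of $K[x_1,\ldots,x_n]\to K[t_1^{\pm1},\ldots,t_m^{\pm1}]$, $x_i\mapsto{\bf t}^{{\bf a}_i}$. The height of $I_A$ equals $\dim_{\mathbb{Q}}\ker_{\mathbb{Q}}(A)$. The binomial arithmetical rank $\mathrm{bar}(I_A)$ is the smallest $t$ such that there exist binomials $B_1,\ldots,B_t\in I_A$ with $I_A=\mathrm{rad}(B_1,\ldots,B_t)$; $I_A$ is a set-theoretic complete intersection on binomials if $\mathrm{bar}(I_A)=\mathrm{ht}(I_A)$. $I_A$ is radical splittable if there exist toric ideals $I_{A_1},I_{A_2}\subset K[x_1,\ldots,x_n]$ with $I_A=\mathrm{rad}(I_{A_1}+I_{A_2})$ and $I_{A_i}\ne I_A$ for $i=1,2$. *)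

From mathcomp Require Import all_boot all_algebra.
From mathcomp Require Import mpoly.
Set Implicit Arguments. Unset Strict Implicit. Unset Printing Implicit Defensive.
Import GRing.Theory.
Local Open Scope ring_scope.

(* A vector configuration A = {a_1,...,a_n} in Z^m is encoded as the integer
   matrix A : 'M[int]_(m, n) whose i-th column is a_i. *)

Definition Adeg (m n : nat) (A : 'M[int]_(m, n)) (u : 'X_{1..n}) : 'cV[int]_m :=
  \col_j \sum_(i < n) ((u i)%:Z * A j i).

Definition pointed_config (m n : nat) (A : 'M[int]_(m, n)) : Prop :=
  forall u : 'X_{1..n}, Adeg A u = 0 -> u = 0%MM.

(* The toric ideal I_A: kernel of K[x_1..x_n] -> K[t^{±1}], x_i |-> t^{a_i}.
   The image of f = sum_u c_u x^u is sum_u c_u t^{Au}; its coefficient at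
   t^w is the sum of the c_u with Au = w.  So f is in the kernel iff all
   these sums vanish. *)
Definition toric_ideal (K : fieldType) (m n : nat) (A : 'M[int]_(m, n))
  (f : {mpoly K[n]}) : Prop :=
  forall w : 'cV[int]_m, \sum_(u <- msupp f | Adeg A u == w) f@_u = 0.

(* height of I_A = dim_Q ker_Q(A) = n - rank_Q(A) *)
Definition toric_height (m n : nat) (A : 'M[int]_(m, n)) : nat :=
  (n - \rank (map_mx (fun z : int => z%:~R : rat) A))%N.

Definition is_binomial (K : fieldType) (n : nat) (B : {mpoly K[n]}) : Prop :=
  exists u v : 'X_{1..n}, B = 'X_[u] - 'X_[v].

Definition in_rad_gen (K : fieldType) (n t : nat) (B : 'I_t -> {mpoly K[n]})
  (f : {mpoly K[n]}) : Prop :=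
  exists (k : nat) (g : 'I_t -> {mpoly K[n]}), f ^+ k = \sum_(i < t) g i * B i.

Definition binomial_radical_gens (K : fieldType) (m n : nat) (A : 'M[int]_(m, n))
  (t : nat) (B : 'I_t -> {mpoly K[n]}) : Prop :=
  (forall i, is_binomial (B i) /\ toric_ideal A (B i)) /\
  (forall f, toric_ideal A f <-> in_rad_gen B f).

(* bar(I_A) = ht(I_A): ht(I_A) is attained, and it is the minimum. *)
Definition stci_on_binomials (K : fieldType) (m n : nat) (A : 'M[int]_(m, n)) : Prop :=
  (exists B : 'I_(toric_height A) -> {mpoly K[n]}, binomial_radical_gens A B) /\
  (forall (t : nat) (B : 'I_t -> {mpoly K[n]}),
      binomial_radical_gens A B -> (toric_height A <= t)%N).

Definition radical_splittable (K : fieldType) (m n : nat) (A : 'M[int]_(m, n)) : Prop :=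
  exists (m1 m2 : nat) (A1 : 'M[int]_(m1, n)) (A2 : 'M[int]_(m2, n)),
    pointed_config A1 /\ pointed_config A2 /\
    (forall f : {mpoly K[n]}, toric_ideal A f <->
       exists (k : nat) (g1 g2 : {mpoly K[n]}),
         toric_ideal A1 g1 /\ toric_ideal A2 g2 /\ f ^+ k = g1 + g2) /\
    ~ (forall f : {mpoly K[n]}, toric_ideal A1 f <-> toric_ideal A f) /\
    ~ (forall f : {mpoly K[n]}, toric_ideal A2 f <-> toric_ideal A f).

From HB Require Import structures.
From mathcomp Require Import all_boot all_order all_algebra.
From mathcomp Require Import mpoly.
Set Implicit Arguments. Unset Strict Implicit. Unset Printing Implicit Defensive.
Import Order.TTheory GRing.Theory Num.Theory.
Local Open Scope ring_scope.

(* Write the binomial generators of I_A as B_i = x^u_i - x^v_i and split them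
   into the first r - 1 and the last one.  Fewer than r = dim ker_Q(A) vectors
   u_i - v_i cannot span ker_Q(A), so some integer row c vanishes on them but
   not on some w = a - b of ker_Z(A).  Appending c to A gives a configuration
   whose toric ideal still contains those B_i but not x^a - x^b, hence is a
   proper subideal of I_A.  The two subideals obtained from the two groups
   together contain every B_i, so the radical of their sum is I_A.  Only the
   existence of ht(I_A) binomial generators is used, not its minimality. *)

Section GradedCoefficient.
Variables (K : fieldType) (m n : nat) (A : 'M[int]_(m, n)).

Definition Acoef (w : 'cV[int]_m) (p : {mpoly K[n]}) : K :=
  \sum_(u <- msupp p | Adeg A u == w) p@_u.

Lemma Acoef_seq w p (s : seq 'X_{1..n}) : uniq s -> {subset msupp p <= s} ->
  Acoef w p = \sum_(u <- s | Adeg A u == w) p@_u.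
Proof.
move=> s_uniq supp_s; rewrite /Acoef (perm_big [seq u <- s | u \in msupp p]).
  rewrite big_filter_cond [RHS](bigID (mem (msupp p))) /=.
  rewrite [X in _ + X]big1 ?addr0 => [|u /andP[_ /memN_msupp_eq0]] //.
  by apply: eq_bigl => u; rewrite andbC.
apply: uniq_perm; rewrite ?filter_uniq ?msupp_uniq // => u.
by rewrite mem_filter; case pu: (u \in msupp p); rewrite // supp_s.
Qed.

Lemma Acoef_is_zmod_morphism w : zmod_morphism (Acoef w).
Proof.
move=> p q; set s := undup (msupp p ++ msupp q).
have ps : {subset msupp p <= s} by move=> u pu; rewrite mem_undup mem_cat pu.
have qs : {subset msupp q <= s} by move=> u qu; rewrite mem_undup mem_cat qu orbT.
have pqs : {subset msupp (p - q) <= s} by move=> u /msuppB_le; rewrite mem_undup.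
rewrite (Acoef_seq w (undup_uniq _) ps) (Acoef_seq w (undup_uniq _) qs).
rewrite (Acoef_seq w (undup_uniq _) pqs) -sumrB.
by apply: eq_bigr => u _; rewrite mcoeffB.
Qed.

HB.instance Definition _ w :=
  GRing.isZmodMorphism.Build {mpoly K[n]} K (Acoef w) (Acoef_is_zmod_morphism w).

Lemma AcoefZ w c p : Acoef w (c *: p) = c * Acoef w p.
Proof.
rewrite (Acoef_seq w (msupp_uniq p) (@msuppZ_le _ _ c p)) mulr_sumr.
by apply: eq_bigr => u _; rewrite mcoeffZ.
Qed.

Lemma AcoefX w u : Acoef w 'X_[u] = (Adeg A u == w)%:R.
Proof. by rewrite /Acoef msuppX big_mkcond big_seq1 mcoeffX eqxx; case: eqP. Qed.

Lemma AdegD u v : Adeg A (u + v)%MM = Adeg A u + Adeg A v.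
Proof.
apply/matrixP => i j; rewrite !mxE -big_split /=.
by apply: eq_bigr => k _; rewrite mnmDE PoszD mulrDl.
Qed.

Lemma AcoefMX w p u : Acoef w (p * 'X_[u]) = Acoef (w - Adeg A u) p.
Proof.
rewrite /Acoef (perm_big _ (msuppMX p u)) big_map.
apply: eq_big => [v|v _]; last by rewrite mcoeffMX.
by rewrite AdegD [RHS]eq_sym subr_eq [Adeg A v + _]addrC eq_sym.
Qed.

Lemma toric_idealD (f g : {mpoly K[n]}) :
  toric_ideal A f -> toric_ideal A g -> toric_ideal A (f + g).
Proof.
by move=> If Ig w; rewrite -/(Acoef w _) raddfD /= [Acoef w f]If [Acoef w g]Ig addr0.
Qed.

Lemma toric_idealMl (h f : {mpoly K[n]}) : toric_ideal A f -> toric_ideal A (h * f).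
Proof.
move=> If w; rewrite -/(Acoef w _) mulrC {1}(mpolyE h) mulr_sumr raddf_sum /=.
by rewrite big1 // => u _; rewrite -scalerAr AcoefZ AcoefMX [Acoef _ f]If mulr0.
Qed.

Lemma toric_ideal_sum (I : Type) (r : seq I) (P : pred I) (F : I -> {mpoly K[n]}) :
  (forall i, P i -> toric_ideal A (F i)) -> toric_ideal A (\sum_(i <- r | P i) F i).
Proof.
move=> IF; elim/big_rec: _ => [w|i f Pi If]; first by rewrite -/(Acoef w _) raddf0.
exact: toric_idealD (IF i Pi) If.
Qed.

Lemma toric_ideal_binomial u v :
  toric_ideal A ('X_[u] - 'X_[v] : {mpoly K[n]}) <-> Adeg A u = Adeg A v.
Proof.
split=> [I_uv|Auv w]; last by rewrite -/(Acoef w _) raddfB /= !AcoefX Auv subrr.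
move: (I_uv (Adeg A u)); rewrite -/(Acoef _ _) raddfB /= !AcoefX eqxx.
by case: eqP => // _; rewrite subr0 => /eqP; rewrite oner_eq0.
Qed.

End GradedCoefficient.

Definition mnm_col n (u : 'X_{1..n}) : 'cV[int]_n := \col_i (u i)%:Z.

Lemma AdegE m n (A : 'M[int]_(m, n)) u : Adeg A u = A *m mnm_col u.
Proof. by apply/matrixP => i j; rewrite !mxE; apply: eq_bigr => k _; rewrite !mxE mulrC. Qed.

Lemma Adeg_eqE m n (A : 'M[int]_(m, n)) u v :
  (Adeg A u == Adeg A v) = (A *m (mnm_col u - mnm_col v) == 0).
Proof. by rewrite !AdegE mulmxBr subr_eq0. Qed.

Lemma exists_mnm_col_sub n (w : 'cV[int]_n) :
  exists u v : 'X_{1..n}, w = mnm_col u - mnm_col v.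
Proof.
exists [multinom (if (0 <= w j ord0)%R then `|w j ord0|%N else 0%N) | j < n].
exists [multinom (if (0 <= w j ord0)%R then 0%N else `|w j ord0|%N) | j < n].
apply/matrixP => i j; rewrite (ord1 j) !mxE !mnmE.
case: ifP => w_ge0; first by rewrite gez0_abs // subr0.
by rewrite ltz0_abs ?sub0r ?opprK // ltNge w_ge0.
Qed.

Lemma Adeg_col_mx m k n (A : 'M[int]_(m, n)) (C : 'M[int]_(k, n)) u :
  Adeg (col_mx A C) u = col_mx (Adeg A u) (Adeg C u).
Proof. by rewrite !AdegE mul_col_mx. Qed.

Lemma pointed_config_col_mx m k n (A : 'M[int]_(m, n)) (C : 'M[int]_(k, n)) :
  pointed_config A -> pointed_config (col_mx A C).
Proof.
move=> pA u; rewrite Adeg_col_mx => /eqP; rewrite col_mx_eq0 => /andP[/eqP Au0 _].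
exact: pA.
Qed.

Lemma toric_ideal_col_mx (K : fieldType) m k n (A : 'M[int]_(m, n))
    (C : 'M[int]_(k, n)) (f : {mpoly K[n]}) : toric_ideal (col_mx A C) f -> toric_ideal A f.
Proof.
(* Split the A-graded piece of degree w according to the C-degree. *)
move=> IACf w; set S := msupp f; set Z := undup (map (Adeg C) S).
have -> : \sum_(u <- S | Adeg A u == w) f@_u =
          \sum_(u <- S | Adeg A u == w) \sum_(z <- Z) (if Adeg C u == z then f@_u else 0).
  rewrite big_seq_cond [RHS]big_seq_cond; apply: eq_bigr => u /andP[uS _].
  have CuZ : Adeg C u \in Z by rewrite mem_undup map_f.
  rewrite (bigD1_seq _ CuZ (undup_uniq _)) /= eqxx big1 ?addr0 // => z.
  by rewrite eq_sym => /negbTE ->.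
rewrite exchange_big big1 // => z _; rewrite -big_mkcondr -[RHS](IACf (col_mx w z)).
apply: eq_bigl => u; rewrite Adeg_col_mx.
by apply/andP/eqP => [[/eqP-> /eqP->] | /eq_col_mx[-> ->]].
Qed.

Lemma separating_kernel_vector (F : fieldType) m n p
    (A : 'M[F]_(m, n)) (D : 'M[F]_(p, n)) :
  (p < n - \rank A)%N ->
  exists (c : 'rV_n) (w : 'cV_n), [/\ A *m w = 0, D *m c^T = 0 & c *m w != 0].
Proof.
move=> p_lt; set KA := kermx A^T; set C := cokermx D.
have : ~~ (KA <= D)%MS.
  apply: contraL p_lt => /mxrankS; rewrite mxrank_ker mxrank_tr -leqNgt => le_KA_D.
  exact: leq_trans le_KA_D (rank_leq_row D).
rewrite submxE => /matrix0Pn[i [j KAC_ij]].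
exists (row j C^T), (row i KA)^T; split.
- by rewrite -[A]trmxK -trmx_mul -row_mul mulmx_ker row0 trmx0.
- by rewrite -[D *m _]trmxK trmx_mul trmxK -row_mul -trmx_mul mulmx_coker trmx0 row0 trmx0.
- apply/matrix0Pn; exists 0, 0; apply: contraNneq KAC_ij => <-.
  by rewrite !mxE; apply/eqP/eq_bigr => k _; rewrite !mxE mulrC.
Qed.

Lemma map_intr_mx_eq0 (R : numDomainType) m n (M : 'M[int]_(m, n)) :
  (map_mx (intr : int -> R) M == 0) = (M == 0).
Proof.
apply/eqP/eqP => [/matrixP intrM0|->]; last exact: raddf0.
by apply/matrixP => i j; move/eqP: (intrM0 i j); rewrite !mxE intr_eq0 => /eqP.
Qed.

Lemma rat_mx_clear_denominators m n (M : 'M[rat]_(m, n)) :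
  exists2 N : int, N != 0 & exists M' : 'M[int]_(m, n), map_mx intr M' = N%:~R *: M.
Proof.
pose den (ij : 'I_m * 'I_n) := denq (M ij.1 ij.2).
exists (\prod_ij den ij).
  by rewrite prodf_seq_neq0; apply/allP => ij _; rewrite denq_neq0.
exists (\matrix_(i, j) (numq (M i j) * \prod_(ij | ij != (i, j)) den ij)).
apply/matrixP => i j; rewrite !mxE intrM numqE [X in _ = X%:~R * _](bigD1 (i, j)) //=.
by rewrite intrM [RHS]mulrC mulrA.
Qed.

Lemma int_separating_kernel_vector m n p (A : 'M[int]_(m, n)) (D : 'M[int]_(p, n)) :
  (p < toric_height A)%N ->
  exists (c : 'rV[int]_n) (w : 'cV[int]_n), [/\ A *m w = 0, D *m c^T = 0 & c *m w != 0].
Proof.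
move=> p_lt.
have [c [w [Aw0 Dc0 cw_nz]]] := separating_kernel_vector (map_mx intr D) p_lt.
have [Nc Nc_nz [c' c'E]] := rat_mx_clear_denominators c.
have [Nw Nw_nz [w' w'E]] := rat_mx_clear_denominators w.
exists c', w'; split; [apply/eqP; rewrite -(map_intr_mx_eq0 rat).. |].
- by rewrite map_mxM w'E -scalemxAr Aw0 scaler0.
- by rewrite map_mxM -map_trmx c'E linearZ /= -scalemxAr Dc0 scaler0.
- rewrite -(map_intr_mx_eq0 rat) map_mxM c'E w'E -scalemxAr -scalemxAl.
  by rewrite !scalemx_eq0 !intr_eq0 (negbTE Nc_nz) (negbTE Nw_nz).
Qed.

Lemma exists_proper_toric_subideal (K : fieldType) m n (I : finType)
    (A : 'M[int]_(m, n)) (B : I -> {mpoly K[n]}) :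
  (#|I| < toric_height A)%N -> (forall i, is_binomial (B i) /\ toric_ideal A (B i)) ->
  exists c : 'rV[int]_n, (forall i, toric_ideal (col_mx A c) (B i)) /\
    ~ (forall f : {mpoly K[n]}, toric_ideal (col_mx A c) f <-> toric_ideal A f).
Proof.
move=> card_lt BA.
have /fin_all_exists[uv Buv] : forall i, exists uv : 'X_{1..n} * 'X_{1..n},
    B i = 'X_[uv.1] - 'X_[uv.2].
  by move=> i; have [[u [v ->]] _] := BA i; exists (u, v).
pose D := \matrix_(k < #|I|) (mnm_col (uv (enum_val k)).1 - mnm_col (uv (enum_val k)).2)^T.
have [c [w [Aw0 Dc0 cw_nz]]] := int_separating_kernel_vector D card_lt.
exists c; split => [i | IAc_eq].
  have := (BA i).2; rewrite Buv !toric_ideal_binomial !Adeg_col_mx => ->.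
  congr col_mx; apply/eqP; rewrite Adeg_eqE -[c *m _]trmxK trmx_mul.
  have := congr1 (row (enum_rank i)) Dc0.
  by rewrite row_mul rowK enum_rankK row0 => ->; rewrite trmx0.
have [a [b wE]] := exists_mnm_col_sub w.
have := (IAc_eq ('X_[a] - 'X_[b])).2; rewrite !toric_ideal_binomial !Adeg_col_mx.
have /eqP -> : Adeg A a == Adeg A b by rewrite Adeg_eqE -wE Aw0.
by move=> /(_ erefl) /eq_col_mx[_ /eqP]; rewrite Adeg_eqE -wE (negbTE cw_nz).
Qed.

Lemma in_rad_genX (K : fieldType) n t (B : 'I_t -> {mpoly K[n]}) f k :
  in_rad_gen B (f ^+ k) -> in_rad_gen B f.
Proof. by case=> j [g fkj]; exists (k * j)%N, g; rewrite exprM. Qed.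

Theorem proposition2p3 (K : fieldType) (m n : nat) (A : 'M[int]_(m, n)) :
  pointed_config A ->
  (2 <= toric_height A)%N ->
  stci_on_binomials K A ->
  radical_splittable K A.
Proof.
move=> pA ht_ge2 [[B [BA IA_rad]] _].
have ht_gt0 : (0 < toric_height A)%N by apply: leq_trans ht_ge2.
pose i0 := Ordinal ht_gt0.
have card_ne_i0 : (#|{: {i | i != i0}}| < toric_height A)%N.
  by rewrite card_sig cardC1 card_ord ltn_predL.
have card_unit_lt : (#|{: unit}| < toric_height A)%N by rewrite card_unit.
have [c1 [Bc1 c1_proper]] :=
  exists_proper_toric_subideal card_ne_i0 (fun i => BA (val i)).
have [c2 [Bc2 c2_proper]] := exists_proper_toric_subideal card_unit_lt (fun=> BA i0).
exists _, _, (col_mx A c1), (col_mx A c2).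
split; first exact: pointed_config_col_mx.
split; first exact: pointed_config_col_mx.
split; last by split.
move=> f; split=> [/IA_rad[k [g fk]] | [k [g1 [g2 [Ig1 [Ig2 fk]]]]]].
  exists k, (\sum_(i | i != i0) g i * B i), (g i0 * B i0).
  split; [|split]; last by rewrite fk (bigD1 i0) //= addrC.
  - by apply: toric_ideal_sum => i i_ne0; apply: toric_idealMl (Bc1 (exist _ i i_ne0)).
  - exact: toric_idealMl (Bc2 tt).
apply/IA_rad/(@in_rad_genX _ _ _ _ _ k)/IA_rad; rewrite fk.
by apply: toric_idealD; [apply: toric_ideal_col_mx Ig1 | apply: toric_ideal_col_mx Ig2].
Qed.
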